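(* Let $R$ be a commutative unital ring, and equip the category $\mathfrak{FdgMod}_R$ of filtered cochain complexes of $R$-modules with the model structure whose generating trivial cofibrations are $J=\{0\to D_R(n,p)\}_{n\in\mathbb Z,p\in\mathbb N}$ (so fibrations are the maps with the right lifting property with respect to $J$). Then a morphism $p:(M,F)\to(N,F)$ is a fibration if and only if $F^kp^n:F^kM^n\to F^kN^n$ is surjective for all $k\in\mathbb N$ and all $n\in\mathbb Z$.
   Context: A filtered cochain complex $(M,F)$ is a cochain complex $M$ of $R$-modules with a decreasing filtration by subcomplexes $F^kM$, $k\in\mathbb N$, $F^0M=M$; morphisms are filtration-preserving cochain maps. $D_R(n)$ is the complex with $R$ in degrees $n,n+1$ and identity differential between them; $D_R(n,p)$ is $D_R(n)$ with $F^k=D_R(n)$ for $k\le p$ and $F^k=0$ for $k>p$. *)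

From mathcomp Require Import all_boot all_order all_algebra.
Set Implicit Arguments. Unset Strict Implicit. Unset Printing Implicit Defensive.
Import Order.TTheory GRing.Theory Num.Theory.
Local Open Scope ring_scope.

Definition is_lin (R : pzRingType) (U V : lmodType R) (f : U -> V) : Prop :=
  forall (a : R) (u v : U), f (a *: u + v) = a *: f u + f v.

Definition is_submod (R : pzRingType) (U : lmodType R) (P : U -> Prop) : Prop :=
  P 0 /\ forall (a : R) (u v : U), P u -> P v -> P (a *: u + v).

Record fcomplex (R : pzRingType) := FComplex {
  obj : int -> lmodType R;
  dif : forall n : int, obj n -> obj (n + 1);
  dif_lin : forall n, is_lin (@dif n);
  dif2 : forall n (x : obj n), dif (dif x) = 0;
  fil : nat -> forall n : int, obj n -> Prop;
  fil_submod : forall k n, is_submod (@fil k n);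
  fil0 : forall n (x : obj n), fil 0 x;
  fil_decr : forall k n (x : obj n), fil k.+1 x -> fil k x;
  fil_dif : forall k n (x : obj n), fil k x -> fil k (dif x)
}.
Arguments obj {R} f n.
Arguments dif {R} f {n} x.
Arguments fil {R} f k {n} x.

Record fmorph (R : pzRingType) (M N : fcomplex R) := FMorph {
  fm : forall n : int, obj M n -> obj N n;
  fm_lin : forall n, is_lin (@fm n);
  fm_dif : forall n (x : obj M n), fm (dif M x) = dif N (fm x);
  fm_fil : forall k n (x : obj M n), fil M k x -> fil N k (fm x)
}.
Arguments fm {R M N} f {n} x.

Definition comp_eq (R : pzRingType) (A B C : fcomplex R)
  (f : fmorph A B) (g : fmorph B C) (h : fmorph A C) : Prop :=
  forall n (x : obj A n), fm g (fm f x) = fm h x.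

Definition rlp (R : pzRingType) (A B M N : fcomplex R)
  (i : fmorph A B) (p : fmorph M N) : Prop :=
  forall (u : fmorph A M) (v : fmorph B N),
    (forall n (x : obj A n), fm p (fm u x) = fm v (fm i x)) ->
    exists h : fmorph B M, comp_eq i h u /\ comp_eq h p v.

Section Zero.
Variable R : pzRingType.

Definition zobj (n : int) : lmodType R := 'rV[R]_0.

Lemma zero_lin (U V : lmodType R) : is_lin (fun _ : U => (0 : V)).
Proof. by move=> a u v; rewrite scaler0 addr0. Qed.

Lemma zero_submod (U : lmodType R) : is_submod (fun _ : U => True).
Proof. by []. Qed.

Definition zero_fcomplex : fcomplex R :=
  @FComplex R zobj (fun n _ => 0) (fun n => @zero_lin (zobj n) (zobj (n + 1))) (fun n x => erefl)
    (fun _ _ _ => True) (fun k n => @zero_submod (zobj n)) (fun _ _ => I)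
    (fun _ _ _ _ => I) (fun _ _ _ _ => I).
End Zero.

Section Disc.
Variables (R : pzRingType) (n : int) (p : nat).

Definition drk (m : int) : nat := if (m == n) || (m == n + 1) then 1%N else 0%N.

Definition dobj (m : int) : lmodType R := 'rV[R]_(drk m).

(* the differential is the identity R -> R from degree n to n+1, else 0 *)
Definition dmx (m : int) : 'M[R]_(drk m, drk (m + 1)) :=
  \matrix_(i, j) (if m == n then 1 else 0).

Definition ddif (m : int) (v : dobj m) : dobj (m + 1) := v *m dmx m.

Lemma ddif_lin m : is_lin (@ddif m).
Proof. by move=> a u v; rewrite /ddif mulmxDl scalemxAl. Qed.

Lemma dmx2 m : dmx m *m dmx (m + 1) = 0.
Proof.
apply/matrixP=> i j; rewrite !mxE big1 // => k _; rewrite !mxE.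
case: (eqVneq m n) => [->|_]; last by rewrite mul0r.
have -> : (n + 1 == n) = false.
  by apply/negbTE; rewrite -subr_eq0 addrAC subrr add0r oner_eq0.
by rewrite mulr0.
Qed.

Lemma ddif2 m (x : dobj m) : ddif (ddif x) = 0.
Proof. by rewrite /ddif -mulmxA dmx2 mulmx0. Qed.

Definition dfil (k : nat) (m : int) (v : dobj m) : Prop := (k <= p)%N \/ v = 0.

Lemma dfil_submod k m : is_submod (@dfil k m).
Proof.
split; first by right.
move=> a u v [hk|->] [hk'|->]; by [left | left | left | right; rewrite scaler0 addr0].
Qed.

Lemma dfil0 m (x : dobj m) : dfil 0 x.
Proof. by left. Qed.

Lemma dfil_decr k m (x : dobj m) : dfil k.+1 x -> dfil k x.
Proof. by case=> [h|->]; [left; apply: ltnW | right]. Qed.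

Lemma dfil_dif k m (x : dobj m) : dfil k x -> dfil k (ddif x).
Proof. by case=> [h|->]; [left | right; rewrite /ddif mul0mx]. Qed.

Definition disc : fcomplex R :=
  @FComplex R dobj ddif ddif_lin ddif2 dfil dfil_submod dfil0 dfil_decr dfil_dif.

Lemma zto_lin m : is_lin (fun _ : zobj R m => (0 : dobj m)).
Proof. exact: zero_lin. Qed.

Definition zero_to_disc : fmorph (zero_fcomplex R) disc :=
  @FMorph R (zero_fcomplex R) disc (fun m _ => 0) zto_lin
    (fun m x => esym (mul0mx _ _)) (fun k m x _ => or_intror erefl).
End Disc.

Definition fibration (R : pzRingType) (M N : fcomplex R) (f : fmorph M N) : Prop :=
  forall (n : int) (p : nat), rlp (zero_to_disc R n p) f.

(* A morphism out of the disc D_R(n,p) is the same thing as an element of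
   F^p of its target in degree n: it is determined by the image of the
   generator of D_R(n) in degree n, and every z in F^p C^n is such an image.
   Since the source 0 of the generating trivial cofibrations is initial, a
   lifting problem of 0 -> D_R(n,p) against f is thus an element y of
   F^p N^n, and a lift is an element of F^p M^n mapped to y by f. *)
From mathcomp Require Import all_boot all_order all_algebra.
Set Implicit Arguments. Unset Strict Implicit. Unset Printing Implicit Defensive.
Import Order.TTheory GRing.Theory Num.Theory.
Local Open Scope ring_scope.

Section LinearAlgebra.
Variable R : pzRingType.
Implicit Types U V : lmodType R.

Lemma is_lin0 U V (f : U -> V) : is_lin f -> f 0 = 0.
Proof.
move=> f_lin; have := f_lin 1 0 0; rewrite scale1r addr0 scale1r => f0.
by apply: (addrI (f 0)); rewrite -f0 addr0.
Qed.

Lemma is_linZ U V (f : U -> V) a u : is_lin f -> f (a *: u) = a *: f u.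
Proof. by move=> f_lin; have := f_lin a u 0; rewrite addr0 is_lin0 // addr0. Qed.

Lemma is_submod0 U (P : U -> Prop) : is_submod P -> P 0.
Proof. by case. Qed.

Lemma is_submodZ U (P : U -> Prop) a u : is_submod P -> P u -> P (a *: u).
Proof. by case=> P0 PD Pu; have := PD a u 0 Pu P0; rewrite addr0. Qed.

Definition row_coef k (r : 'rV[R]_k) : R := \sum_i r 0 i.

Lemma row_coef_lin k a (u v : 'rV[R]_k) :
  row_coef (a *: u + v) = a * row_coef u + row_coef v.
Proof.
by rewrite /row_coef mulr_sumr -big_split; apply: eq_bigr => i _; rewrite !mxE.
Qed.

Lemma row_coef0 k : row_coef (0 : 'rV[R]_k) = 0.
Proof. by rewrite /row_coef big1 // => i _; rewrite mxE. Qed.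

Lemma row_coef_const1 k : row_coef (const_mx 1 : 'rV[R]_k) = k%:R.
Proof.
by rewrite /row_coef; under eq_bigr do rewrite mxE; rewrite sumr_const card_ord.
Qed.

Lemma row_coefK k (r : 'rV[R]_k) : (k <= 1)%N -> r = row_coef r *: const_mx 1.
Proof.
case: k r => [|[|//]] r _; apply/matrixP => i j; rewrite !mxE; first by case: j.
by rewrite /row_coef big_ord1 mulr1 !ord1.
Qed.

End LinearAlgebra.

Section Complexes.
Variable R : pzRingType.

Lemma fil_le (C : fcomplex R) j k m (x : obj C m) :
  (j <= k)%N -> fil C k x -> fil C j x.
Proof.
move=> /subnK <-; elim: (k - j)%N => [//|d IHd] Cx; apply: IHd; apply: fil_decr.
by rewrite addSn in Cx.
Qed.

Lemma fil0_zero (C : fcomplex R) k m : fil C k (0 : obj C m).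
Proof. exact: is_submod0 (fil_submod _ _ _). Qed.

Lemma fm0 (M N : fcomplex R) (f : fmorph M N) m : fm f (0 : obj M m) = 0.
Proof. exact: is_lin0 (@fm_lin _ _ _ f m). Qed.

Lemma fm_from_zero (C : fcomplex R) (g : fmorph (zero_fcomplex R) C) m
    (x : obj (zero_fcomplex R) m) :
  fm g x = 0.
Proof.
have -> : x = 0 by apply/matrixP => i [].
exact: fm0.
Qed.

Definition zero_morph (C : fcomplex R) : fmorph (zero_fcomplex R) C :=
  @FMorph R (zero_fcomplex R) C (fun m _ => 0) (fun m => @zero_lin R _ _)
    (fun m _ => esym (is_lin0 (@dif_lin _ C m))) (fun k m _ _ => fil0_zero C k m).

Section Composition.
Variables (A B C : fcomplex R) (f : fmorph A B) (g : fmorph B C).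

Lemma comp_lin m : is_lin (fun x : obj A m => fm g (fm f x)).
Proof. by move=> a u v; rewrite (@fm_lin _ _ _ f) (@fm_lin _ _ _ g). Qed.

Lemma comp_dif m (x : obj A m) : fm g (fm f (dif A x)) = dif C (fm g (fm f x)).
Proof. by rewrite !fm_dif. Qed.

Lemma comp_fil k m (x : obj A m) : fil A k x -> fil C k (fm g (fm f x)).
Proof. by move=> Ax; do 2 apply: fm_fil. Qed.

Definition fmorph_comp : fmorph A C :=
  @FMorph R A C (fun m x => fm g (fm f x)) comp_lin comp_dif comp_fil.

End Composition.
End Complexes.

Lemma addr1_neq (m : int) : (m + 1 == m) = false.
Proof. by apply/negbTE; rewrite -subr_eq0 addrAC subrr add0r oner_eq0. Qed.

Section Disc.
Variables (R : pzRingType) (n : int) (p : nat).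

Lemma drk_le1 m : (drk n m <= 1)%N.
Proof. by rewrite /drk; case: ifP. Qed.

Lemma drk_n : drk n n = 1%N.
Proof. by rewrite /drk eqxx. Qed.

Lemma drk_n1 : drk n (n + 1) = 1%N.
Proof. by rewrite /drk eqxx orbT. Qed.

Lemma drk_out m : m != n -> m != n + 1 -> drk n m = 0%N.
Proof. by rewrite /drk => /negbTE -> /negbTE ->. Qed.

Definition disc_gen : obj (disc R n p) n := const_mx 1.

Lemma disc_gen_fil : fil (disc R n p) p disc_gen.
Proof. by left. Qed.

Lemma disc_gen_dif : dif (disc R n p) disc_gen = const_mx 1.
Proof.
apply/matrixP => i j; rewrite !mxE /=; under eq_bigr do rewrite !mxE eqxx mulr1.
by rewrite sumr_const card_ord drk_n.
Qed.

Lemma row_coef_ddif m (r : dobj R n m) :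
  row_coef (ddif r) = if m == n then row_coef r else 0.
Proof.
rewrite /ddif /row_coef; case: (eqVneq m n) => [e|ne].
  subst m; under eq_bigr => j _ do
    (rewrite !mxE; under eq_bigr => i _ do rewrite mxE eqxx mulr1).
  by rewrite sumr_const card_ord drk_n1.
by rewrite big1 // => j _; rewrite !mxE big1 // => i _; rewrite mxE (negbTE ne) mulr0.
Qed.

(* In each degree [r = row_coef r *: const_mx 1], and [const_mx 1] is the
   generator, its differential, or [0]. *)
Lemma disc_morph_eq (C : fcomplex R) (g h : fmorph (disc R n p) C) :
  fm g disc_gen = fm h disc_gen -> forall m (r : dobj R n m), fm g r = fm h r.
Proof.
move=> gh m r; rewrite (row_coefK r (drk_le1 m)).
rewrite (is_linZ _ _ (@fm_lin _ _ _ g m)) (is_linZ _ _ (@fm_lin _ _ _ h m)).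
congr (_ *: _); clear r.
case: (eqVneq m n) => [->|ne]; first exact: gh.
case: (eqVneq m (n + 1)) => [->|ne1].
  by rewrite -disc_gen_dif !fm_dif gh.
have -> : (const_mx 1 : dobj R n m) = 0.
  by apply/matrixP => i [j hj]; exfalso; move: hj; rewrite drk_out.
by rewrite !fm0.
Qed.

Section DiscMap.
Variables (C : fcomplex R) (z : obj C n) (Cz : fil C p z).

Definition disc_image (m : int) : obj C m :=
  match n =P m with
  | ReflectT e => eq_rect n (obj C) z m e
  | ReflectF _ => match (n + 1) =P m with
                  | ReflectT e => eq_rect (n + 1) (obj C) (dif C z) m e
                  | ReflectF _ => 0 end end.

Lemma disc_image_n : disc_image n = z.
Proof. by rewrite /disc_image; case: (n =P n) => [e|//]; rewrite (eq_axiomK e). Qed.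

Lemma disc_image_n1 : disc_image (n + 1) = dif C z.
Proof.
rewrite /disc_image; case: (n =P n + 1) => [e|_].
  by exfalso; move: (addr1_neq n); rewrite -e eqxx.
by case: (n + 1 =P n + 1) => [e|//]; rewrite (eq_axiomK e).
Qed.

Lemma disc_image_out m : m != n -> m != n + 1 -> disc_image m = 0.
Proof.
move=> ne ne1; rewrite /disc_image; case: (n =P m) => [e|_].
  by rewrite e eqxx in ne.
by case: (n + 1 =P m) => [e|//]; rewrite e eqxx in ne1.
Qed.

Lemma disc_image_fil m : fil C p (disc_image m).
Proof.
case: (eqVneq m n) => [->|ne]; first by rewrite disc_image_n.
case: (eqVneq m (n + 1)) => [->|ne1]; first by rewrite disc_image_n1; apply: fil_dif.
by rewrite disc_image_out //; apply: fil0_zero.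
Qed.

Lemma disc_map_lin m : is_lin (fun r : dobj R n m => row_coef r *: disc_image m).
Proof. by move=> a u v; rewrite row_coef_lin scalerDl scalerA. Qed.

Lemma disc_map_dif m (r : dobj R n m) :
  row_coef (ddif r) *: disc_image (m + 1) = dif C (row_coef r *: disc_image m).
Proof.
rewrite row_coef_ddif (is_linZ _ _ (@dif_lin _ C m)).
case: (eqVneq m n) => [e|ne]; first by subst m; rewrite disc_image_n disc_image_n1.
rewrite scale0r; case: (eqVneq m (n + 1)) => [e|ne1].
  by subst m; rewrite disc_image_n1 dif2 scaler0.
by rewrite disc_image_out // (is_lin0 (@dif_lin _ C m)) scaler0.
Qed.

Lemma disc_map_fil k m (r : dobj R n m) :
  dfil p k r -> fil C k (row_coef r *: disc_image m).
Proof.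
case=> [kp|->]; last by rewrite row_coef0 scale0r; apply: fil0_zero.
exact: is_submodZ (fil_submod _ _ _) (fil_le kp (disc_image_fil m)).
Qed.

Definition disc_map : fmorph (disc R n p) C :=
  @FMorph R (disc R n p) C (fun m r => row_coef r *: disc_image m)
    disc_map_lin disc_map_dif disc_map_fil.

Lemma disc_map_gen : fm disc_map disc_gen = z.
Proof. by rewrite /= row_coef_const1 drk_n scale1r disc_image_n. Qed.

End DiscMap.
End Disc.

Theorem proposition1p19 (R : comPzRingType) (M N : fcomplex R) (f : fmorph M N) :
  fibration f <->
  (forall (k : nat) (n : int) (y : obj N n),
     fil N k y -> exists x : obj M n, fil M k x /\ fm f x = y).
Proof.
split=> [fib k n y Ny | surj n p u v uv].
  have [|h [_ hv]] := fib n k (zero_morph M) (disc_map Ny).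
    by move=> m x /=; rewrite fm0 row_coef0 scale0r.
  exists (fm h (disc_gen R n k)); split; first exact/fm_fil/disc_gen_fil.
  by rewrite hv disc_map_gen.
have [x [Mx fx]] := surj p n _ (fm_fil v (disc_gen_fil R n p)).
exists (disc_map Mx); split=> m r.
  by rewrite (fm_from_zero u) /= row_coef0 scale0r.
apply: (disc_morph_eq (g := fmorph_comp (disc_map Mx) f)).
exact: etrans (congr1 (fm f) (disc_map_gen Mx)) fx.
Qed.
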